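(* Let $g:\mathds{R}^d\setminus\{0\}\to[0,\infty)$ be continuous and let $(\mu_n)\subset K^g(\mathds{R}^d,\mathcal{M}^+(\mathds{R}^d\setminus\{0\}))$ converge boundedly and pointwise to $\mu:\mathds{R}^d\to\mathcal{M}^+(\mathds{R}^d\setminus\{0\})$. Then $\mu\in K^g(\mathds{R}^d,\mathcal{M}^+(\mathds{R}^d\setminus\{0\}))$.
   Context: $\mathcal{M}^+(\mathds{R}^d\setminus\{0\})$: positive locally finite measures on $\mathds{R}^d\setminus\{0\}$ with the vague topology. $K^g$: measurable maps $\mu:\mathds{R}^d\to\mathcal{M}^+(\mathds{R}^d\setminus\{0\})$ with $\|\mu\|_g:=\sup_x\int g(y)\mu(x,dy)<\infty$ and $\lim_{R\to\infty}\sup_{x\in K}\mu(x,\{|y|>R\})=0$ for every compact $K\subset\mathds{R}^d$. Bounded pointwise convergence $\mu_n\to\mu$: $\sup_n\|\mu_n\|_g<\infty$, $\mu_n(x)\to\mu(x)$ vaguely for every $x$, and $\lim_{R\to\infty}\sup_n\sup_{x\in K}\mu_n(x,\{|y|>R\})=0$ for every compact $K$. *)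

From HB Require Import structures.
From mathcomp Require Import all_boot all_order all_algebra.
From mathcomp Require Import all_classical all_reals all_analysis.
Set Implicit Arguments. Unset Strict Implicit. Unset Printing Implicit Defensive.
Import Order.TTheory GRing.Theory Num.Theory.
Import numFieldNormedType.Exports.
Local Open Scope classical_set_scope.
Local Open Scope ring_scope.

(* R^d as row vectors (product = Euclidean topology). *)
Definition Rd (R : realType) (d : nat) := 'rV[R]_d.

Definition BRd (R : realType) (d : nat) := g_sigma_algebraType (@open (Rd R d)).

Definition eucl (R : realType) (d : nat) (y : Rd R d) : R :=
  Num.sqrt (\sum_(i < d) (y ord0 i) ^+ 2).

(* Positive measures on R^d \ {0}: represented as Borel measures on R^d
   not charging {0}. *)
Definition meas (R : realType) (d : nat) := {measure set (BRd R d) -> \bar R}.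

Definition Mplus (R : realType) (d : nat) (nu : meas R d) : Prop :=
  nu [set (0 : Rd R d)] = 0%E /\
  forall K : set (Rd R d), compact K -> ~ K 0 -> (nu K < +oo)%E.

Definition Cc0 (R : realType) (d : nat) (f : Rd R d -> R) : Prop :=
  continuous f /\
  exists K : set (Rd R d), [/\ compact K, ~ K 0 & forall y, ~ K y -> f y = 0].

Definition integ (R : realType) (d : nat) (nu : meas R d) (f : Rd R d -> R)
  : \bar R := (\int[nu]_(y in (~` [set (0%R : Rd R d)] : set (BRd R d))) (f y)%:E)%E.

Definition vague_cvg (R : realType) (d : nat) (nus : nat -> meas R d)
  (nu : meas R d) : Prop :=
  forall f, Cc0 f -> (fun n => integ (nus n) f) @ \oo --> integ nu f.

(* open sets of the vague topology on M^+(R^d\{0}) (the coarsest topology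
   making nu |-> int f dnu continuous for every f in C_c(R^d\{0})),
   given by their traces on M^+. *)
Definition vague_open (R : realType) (d : nat) (S : set (meas R d)) : Prop :=
  forall nu, S nu -> Mplus nu ->
  exists (k : nat) (fs : nat -> Rd R d -> R) (e : R),
    [/\ 0 < e, (forall i, (i < k)%N -> Cc0 (fs i)) &
      forall nu', Mplus nu' ->
        (forall i, (i < k)%N -> (`| integ nu' (fs i) - integ nu (fs i) | < e%:E)%E) ->
        S nu'].

Definition vague_measurable (R : realType) (d : nat) (mu : Rd R d -> meas R d)
  : Prop :=
  forall S : set (meas R d), <<s @vague_open R d >> S ->
    @measurable _ (BRd R d) (mu @^-1` S).

Definition gbounded (R : realType) (d : nat) (g : Rd R d -> R)
  (mu : Rd R d -> meas R d) (C : R) : Prop :=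
  forall x, (integ (mu x) g <= C%:E)%E.

Definition tight (R : realType) (d : nat) (mu : Rd R d -> meas R d) : Prop :=
  forall K : set (Rd R d), compact K ->
  forall e : R, 0 < e ->
    \forall r \near (pinfty_nbhs R), forall x, K x ->
      (mu x [set y | (r < eucl y)%R] <= e%:E)%E.

Definition Kg (R : realType) (d : nat) (g : Rd R d -> R)
  (mu : Rd R d -> meas R d) : Prop :=
  [/\ forall x, Mplus (mu x),
      vague_measurable mu,
      exists C : R, gbounded g mu C
    & tight mu].

Definition bp_cvg (R : realType) (d : nat) (g : Rd R d -> R)
  (mus : nat -> Rd R d -> meas R d) (mu : Rd R d -> meas R d) : Prop :=
  [/\ exists C : R, forall n, gbounded g (mus n) C,
      forall x, vague_cvg (fun n => mus n x) (mu x)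
    & forall K : set (Rd R d), compact K ->
      forall e : R, 0 < e ->
        \forall r \near (pinfty_nbhs R), forall n x, K x ->
          (mus n x [set y | (r < eucl y)%R] <= e%:E)%E].

(* Measurability: for [f] in C_c(R^d \ {0}), [x |-> int f dmu(x)] is the pointwise
   limit of the measurable maps [x |-> int f dmu_n(x)].  This suffices because the
   vague topology has a countable base: every such [f] is uniformly approximated by
   differences of maxima of finitely many "tents" with rational data, with an error
   dominated by [del * h] for a tent combination [h >= 1] on the support of [f], so a
   vague open set is a countable union of boxes [{nu | |int G_i dnu - a_i| < e_i}].
   Integral bound and tightness: [g] and the indicator of [{|y| > r}] are increasing
   limits of C_c functions, so by monotone convergence the bounds satisfied by the
   [mu_n(x)] are inherited by their vague limit [mu(x)]. *)

From HB Require Import structures.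
From mathcomp Require Import all_boot all_order all_algebra finmap.
From mathcomp Require Import all_classical all_reals all_analysis.
From mathcomp Require Import measurable_realfun lra.
Import Order.TTheory GRing.Theory Num.Theory.
Import numFieldNormedType.Exports.
Local Open Scope classical_set_scope.
Local Open Scope ring_scope.

Set Implicit Arguments. Unset Strict Implicit. Unset Printing Implicit Defensive.

Section punctured_space.
Variables (R : realType) (d : nat).
Local Notation V := (Rd R d).
Local Notation BV := (BRd R d).
Local Notation V0 := (~` [set (0 : V)]).

Lemma open_measurableRd (A : set V) : open A -> @measurable _ BV A.
Proof. exact: sub_sigma_algebra. Qed.

Lemma closed_measurableRd (A : set V) : closed A -> @measurable _ BV A.
Proof.
move=> cA; rewrite -(setCK A); apply: measurableC; apply: open_measurableRd.
exact: closed_openC.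
Qed.

Lemma compact_measurableRd (K : set V) : compact K -> @measurable _ BV K.
Proof. by move=> cK; apply: closed_measurableRd; exact: compact_closed. Qed.

Lemma closed_set1_0 : closed [set (0 : V)].
Proof.
by apply: accessible_closed_set1; apply: hausdorff_accessible; exact: norm_hausdorff.
Qed.

Lemma measurableV0 : @measurable _ BV V0.
Proof. by apply: measurableC; apply: closed_measurableRd; exact: closed_set1_0. Qed.

Lemma continuous_measurable_funRd (f : V -> R) (A : set BV) :
  continuous f -> measurable_fun A (f : BV -> R).
Proof.
move=> cf mA; apply: (measurability _ (RGenOpens.measurableE R)) => //.
move=> _ [_ [a [b ->] <-]]; apply: measurableI => //.
by apply: open_measurableRd; apply: (proj1 (continuousP f) cf); exact: interval_open.
Qed.

Lemma continuous_normB (c : V) : continuous (fun y : V => `|y - c|).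
Proof.
move=> y; apply: (@continuous_comp _ _ _ (fun y : V => y - c) Num.norm).
  have hc : {for y, continuous (fun _ : V => c)} by exact: cst_continuous.
  exact: (continuousB (@cvg_id _ _) hc).
exact: norm_continuous.
Qed.

Lemma compact_closed_ballRd (c : V) (r : R) : compact [set y : V | `|y - c| <= r].
Proof.
apply: bounded_closed_compact.
  exists (`|c| + r); split; first exact: num_real.
  move=> M HM y /= Hy; apply/ltW/(le_lt_trans _ HM).
  rewrite -[y](subrK c); apply: le_trans (ler_normD _ _) _.
  by rewrite addrC lerD2l.
exact: (proj1 (continuous_closedP _) (@continuous_normB c) _ (@closed_le R r)).
Qed.

Lemma Cc0_bounded (f : V -> R) : Cc0 f -> exists2 M, 0 <= M & forall y, `|f y| <= M.
Proof.
move=> [cf [K [cK K0 fK]]].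
have /compact_bounded [M [_ HM]] : compact (f @` K).
  by apply: continuous_compact => //; exact: continuous_subspaceT.
exists (Num.max (M + 1) 0) => [|y]; first by rewrite le_max lexx orbT.
have [Ky|Ky] := pselect (K y); last by rewrite fK // normr0 le_max lexx orbT.
by apply: (HM (Num.max (M + 1) 0)); [rewrite lt_max ltrDl ltr01 | exists y].
Qed.

Lemma Cc0_measurable_fun (f : V -> R) (A : set BV) :
  Cc0 f -> measurable_fun A (EFin \o (f : BV -> R)).
Proof. by move=> [cf _]; apply/measurable_EFinP; exact: continuous_measurable_funRd. Qed.

Lemma Cc0_integrable (nu : meas R d) (f : V -> R) :
  Mplus nu -> Cc0 f -> nu.-integrable (V0 : set BV) (EFin \o (f : BV -> R)).
Proof.
move=> [_ nuK] cf; have [M M0 HM] := Cc0_bounded cf.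
have [_ [K [cK K0 fK]]] := cf; have mK := compact_measurableRd cK.
apply/integrableP; split; first exact: Cc0_measurable_fun.
apply: (@le_lt_trans _ _ (\int[nu]_(y in (V0 : set BV)) (M * \1_K y)%:E)%E).
  apply: ge0_le_integral => //.
  - exact: measurableV0.
  - by apply: measurableT_comp => //; exact: Cc0_measurable_fun.
  - by apply/measurable_EFinP; exact: measurable_funM.
  - move=> y _ /=; rewrite lee_fin indicE.
    have [Ky|Ky] := pselect (K y); first by rewrite mem_set // mulr1.
    by rewrite fK // normr0 memNset // mulr0.
rewrite (@integralZl_indic _ _ _ _ _ measurableV0 (fun _ => K)) //; last first.
  by move=> /lt_geF; rewrite M0.
rewrite integral_indic //; last exact: measurableV0.
apply: lte_mul_pinfty => //; apply: le_lt_trans (nuK K cK K0).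
by apply: le_measure; rewrite ?inE //; apply: measurableI => //; exact: measurableV0.
Qed.

Lemma Cc0_cst0 : Cc0 (fun _ : V => 0 : R).
Proof. by split; [exact: cst_continuous | exists set0; split => //; exact: compact0]. Qed.

Lemma Cc0B f h : Cc0 f -> Cc0 h -> Cc0 (fun y : V => f y - h y).
Proof.
move=> [cf [K1 [cK1 K10 fK1]]] [ch [K2 [cK2 K20 hK2]]]; split.
  by move=> y; exact: (continuousB (cf y) (ch y)).
exists (K1 `|` K2); split; [exact: compactU | by case |].
by move=> y /not_orP [/fK1 -> /hK2 ->]; rewrite subr0.
Qed.

Lemma Cc0_scale c f : Cc0 f -> Cc0 (fun y : V => c * f y).
Proof.
move=> [cf [K [cK K0 fK]]]; split.
  move=> y; have hc : {for y, continuous (fun _ : V => c)} by exact: cst_continuous.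
  exact: (continuousM hc (cf y)).
by exists K; split => // y /fK ->; rewrite mulr0.
Qed.

Lemma Cc0_max f h : Cc0 f -> Cc0 h -> Cc0 (fun y : V => Num.max (f y) (h y)).
Proof.
move=> [cf [K1 [cK1 K10 fK1]]] [ch [K2 [cK2 K20 hK2]]]; split.
  by move=> y; exact: (continuous_max (cf y) (ch y)).
exists (K1 `|` K2); split; [exact: compactU | by case |].
by move=> y /not_orP [/fK1 -> /hK2 ->]; rewrite maxxx.
Qed.

Definition cint (nu : meas R d) (f : V -> R) : R := fine (integ nu f).

Lemma integ_cint nu f : Mplus nu -> Cc0 f -> integ nu f = (cint nu f)%:E.
Proof.
move=> hn hf; rewrite /cint fineK //.
exact: (integrable_fin_num measurableV0 (Cc0_integrable hn hf)).
Qed.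

Lemma cintB nu f h : Mplus nu -> Cc0 f -> Cc0 h ->
  cint nu (fun y => f y - h y) = cint nu f - cint nu h.
Proof.
move=> hn hf hh; apply: EFin_inj; rewrite EFinB -!integ_cint //; last exact: Cc0B.
by rewrite /integ -integralB_EFin //; [exact: measurableV0 | exact: Cc0_integrable..].
Qed.

Lemma cint_scale nu c h : Mplus nu -> Cc0 h ->
  cint nu (fun y => c * h y) = c * cint nu h.
Proof.
move=> hn hh; apply: EFin_inj; rewrite EFinM -!integ_cint //; last exact: Cc0_scale.
by rewrite /integ -integralZl //; [exact: measurableV0 | exact: Cc0_integrable].
Qed.

Lemma cint_ge0 nu f : Mplus nu -> Cc0 f -> (forall y, 0 <= f y) -> 0 <= cint nu f.
Proof.
move=> hn hf f0; rewrite -lee_fin -integ_cint //.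
by apply: integral_ge0 => y _; rewrite lee_fin.
Qed.

Lemma cint_norm_le nu f h : Mplus nu -> Cc0 f -> Cc0 h ->
  (forall y, `|f y| <= h y) -> `|cint nu f| <= cint nu h.
Proof.
move=> hn hf hh fh; rewrite -lee_fin -abse_EFin -!integ_cint //.
rewrite /integ; apply: le_trans.
  exact: (le_abse_integral nu measurableV0 (@Cc0_measurable_fun f V0 hf)).
apply: ge0_le_integral => //.
- exact: measurableV0.
- by apply: measurableT_comp => //; exact: Cc0_measurable_fun.
- exact: Cc0_measurable_fun.
- by move=> y _ /=; rewrite lee_fin.
Qed.

End punctured_space.

Arguments Cc0_cst0 {R d}.

Section clamp.
Variable R : realType.

Lemma ratr_between (a b : R) : a < b -> exists q : rat, a < ratr q < b.
Proof. by move=> /rat_in_itvoo[q]; rewrite in_itv; exists q. Qed.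

Definition clamp01 (t : R) : R := Num.min 1 (Num.max 0 t).

Lemma clamp01_ge0 t : 0 <= clamp01 t.
Proof. by rewrite /clamp01 le_min ler01 le_max lexx. Qed.

Lemma clamp01_le1 t : clamp01 t <= 1.
Proof. by rewrite /clamp01 ge_min lexx. Qed.

Lemma clamp01_eq0 t : t <= 0 -> clamp01 t = 0.
Proof. by move=> t0; rewrite /clamp01 (max_l t0) (min_r ler01). Qed.

Lemma clamp01_eq1 t : 1 <= t -> clamp01 t = 1.
Proof. by move=> t1; rewrite /clamp01 (max_r (le_trans ler01 t1)) min_l. Qed.

Lemma le_clamp01 s t : s <= t -> clamp01 s <= clamp01 t.
Proof. by move=> st; rewrite /clamp01 le_min2 // le_max2. Qed.

Lemma continuous_clamp01 : continuous clamp01.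
Proof.
move=> t; have c1 : {for t, continuous (fun _ : R => 1 : R)} by exact: cst_continuous.
have c0 : {for t, continuous (fun _ : R => 0 : R)} by exact: cst_continuous.
exact: (continuous_min c1 (continuous_max c0 (@cvg_id _ _))).
Qed.

End clamp.

Section tents.
Variables (R : realType) (d : nat).
Local Notation V := (Rd R d).
Local Notation BV := (BRd R d).

(* A tent [(c, r, q)] has height [q] on the ball of center [c] and radius
   [r/2], vanishes off the ball of radius [r], and is linear in [|y - c|]
   in between; [r < |c|] keeps its support away from the origin. *)
Local Notation tent_data := ('rV[rat]_d * rat * rat)%type.

Definition ratvec (c : 'rV[rat]_d) : V := map_mx ratr c.

Definition tent (p : tent_data) (y : V) : R :=
  ratr p.2 * clamp01 (2 - 2 * (`|y - ratvec p.1.1| / ratr p.1.2)).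

Definition tent_ok (p : tent_data) : bool :=
  [&& 0 < ratr p.1.2 :> R, ratr p.1.2 < `|ratvec p.1.1| & 0 <= ratr p.2 :> R].

Lemma tent_le p y : tent_ok p -> tent p y <= ratr p.2.
Proof. by case/and3P => _ _ q0; rewrite /tent ler_piMr // clamp01_le1. Qed.

Lemma tent_eq0 p y : tent_ok p -> ratr p.1.2 <= `|y - ratvec p.1.1| -> tent p y = 0.
Proof.
case/and3P => r0 _ _ ry; rewrite /tent clamp01_eq0 ?mulr0 //.
have : 1 <= `|y - ratvec p.1.1| / ratr p.1.2 by rewrite ler_pdivlMr // mul1r.
set X := _ / _; lra.
Qed.

Lemma tent_eq_height p y : tent_ok p ->
  `|y - ratvec p.1.1| <= ratr p.1.2 / 2 -> tent p y = ratr p.2.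
Proof.
case/and3P => r0 _ _ ry; rewrite /tent clamp01_eq1 ?mulr1 //.
have : `|y - ratvec p.1.1| / ratr p.1.2 <= 2^-1 by rewrite ler_pdivrMr // mulrC.
set X := _ / _; lra.
Qed.

Lemma continuous_tent p : continuous (tent p).
Proof.
move=> y; have cst (a : R) : {for y, continuous (fun _ : V => a)}.
  exact: cst_continuous.
apply: (continuousM (cst _)).
apply: (@continuous_comp _ _ _ _ (@clamp01 R)); last exact: continuous_clamp01.
apply: (continuousB (cst _)); apply: (continuousM (cst _)).
exact: (continuousM (@continuous_normB _ _ (ratvec p.1.1) y) (cst _)).
Qed.

Lemma Cc0_tent p : tent_ok p -> Cc0 (tent p).
Proof.
move=> vp; split; first exact: continuous_tent.
exists [set y | `|y - ratvec p.1.1| <= ratr p.1.2]; split.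
- exact: compact_closed_ballRd.
- by case/and3P: vp => _ rc _; rewrite /= sub0r normrN; apply/negP; rewrite -ltNge.
- by move=> y /negP; rewrite -ltNge => /ltW; exact: tent_eq0.
Qed.

Definition max_tents (L : seq tent_data) (y : V) : R :=
  foldr (fun p acc => Num.max (tent p y) acc) 0 L.

Lemma Cc0_max_tents L : all tent_ok L -> Cc0 (max_tents L).
Proof.
elim: L => [_|p L IH /andP [vp vL]]; first exact: Cc0_cst0.
exact: (Cc0_max (Cc0_tent vp) (IH vL)).
Qed.

Lemma max_tents_ge0 L y : 0 <= max_tents L y.
Proof. by elim: L => [|p L IH] //=; rewrite le_max IH orbT. Qed.

Lemma max_tents_ge L p y : p \in L -> tent p y <= max_tents L y.
Proof.
elim: L => [//|p' L IH]; rewrite inE => /orP [/eqP -> | pL] /=.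
  by rewrite le_max lexx.
by rewrite le_max (IH pL) orbT.
Qed.

Lemma max_tents_le L y b :
  (forall p, p \in L -> tent p y <= b) -> 0 <= b -> max_tents L y <= b.
Proof.
elim: L => [//|p L IH] H b0 /=; rewrite ge_max H ?mem_head //=.
by apply: IH => // p' p'L; apply: H; rewrite inE p'L orbT.
Qed.

Lemma ratvec_approx (z : V) (e : R) : 0 < e -> exists c, `|z - ratvec c| < e.
Proof.
move=> e0.
have /choice[F HF] : forall i : 'I_d, exists q : rat, `|z ord0 i - ratr q| < e / 2.
  move=> i; have /ratr_between[q /andP[h1 h2]] : z ord0 i - e / 2 < z ord0 i + e / 2.
    by lra.
  by exists q; rewrite ltr_norml; apply/andP; split; lra.
exists (\row_i F i); suff : ball z e (ratvec (\row_i F i)) by rewrite -ball_normE.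
by split => // i j; rewrite (ord1 i) !mxE; apply: lt_trans (HF j) _; lra.
Qed.

Lemma tent_cover (K : set V) (Good : tent_data -> Prop) : compact K -> ~ K 0 ->
  (forall z, K z -> exists2 e : R, 0 < e & forall c r, 0 < (ratr r : R) ->
      `|z - ratvec c| < ratr r / 4 -> ratr r < e ->
      exists q, Good (c, r, q) /\ (0 <= ratr q :> R)) ->
  exists L : seq tent_data, (forall p, p \in L -> tent_ok p /\ Good p) /\
    (forall z, K z -> exists2 p, p \in L & `|z - ratvec p.1.1| < ratr p.1.2 / 2).
Proof.
rewrite compact_cover => cK K0 HG.
have [|z Kz|D' D'sub Kcov] := cK _ [set p | tent_ok p /\ Good p]
  (fun p => [set y | `|y - ratvec p.1.1| < ratr p.1.2 / 2]).
- move=> p _.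
  by have := proj1 (continuousP _) (@continuous_normB _ _ (ratvec p.1.1)) _
    (@open_lt R (ratr p.1.2 / 2)).
- have z0 : z != 0 by apply: contraPneq K0 => <-.
  have [e e0 He] := HG z Kz.
  have [r /andP [r0]] : exists r : rat, (0 : R) < ratr r < Num.min e (`|z| / 2).
    by apply: ratr_between; rewrite lt_min e0 /= divr_gt0 // normr_gt0.
  rewrite lt_min => /andP [re rz].
  have [c zc] : exists c, `|z - ratvec c| < ratr r / 4.
    by apply: ratvec_approx; rewrite divr_gt0.
  have [q [Gq q0]] := He c r r0 zc re.
  exists (c, r, q); last by rewrite /=; lra.
  split => //; apply/and3P; split => //=.
  have : `|z| <= `|z - ratvec c| + `|ratvec c|.
    by rewrite -{1}[z](subrK (ratvec c)) ler_normD.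
  lra.
- exists (enum_fset D'); split; first by move=> p /D'sub; rewrite inE.
  by move=> z /Kcov [p pD' zp]; exists p.
Qed.

Lemma max_tents_ge1 (K : set V) : compact K -> ~ K 0 ->
  exists L, all tent_ok L /\ forall z, K z -> 1 <= max_tents L z.
Proof.
move=> cK K0.
have [|L [HL Hcov]] := @tent_cover K (fun p => p.2 = 1%Q) cK K0.
  by move=> z _; exists 1 => // c r _ _ _; exists 1%Q; split => //; rewrite rmorph1.
exists L; split; first by apply/allP => p /HL [].
move=> z /Hcov [p pL zp]; have [vp p1] := HL p pL.
apply: le_trans (max_tents_ge z pL).
by rewrite tent_eq_height ?p1 ?rmorph1 // ltW.
Qed.

Definition tent_fits (f : V -> R) (del : R) (p : tent_data) : Prop :=
  (forall y, `|y - ratvec p.1.1| < ratr p.1.2 -> ratr p.2 <= f y) /\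
  (forall y, `|y - ratvec p.1.1| < ratr p.1.2 / 2 -> f y <= ratr p.2 + del).

Lemma tent_fits_near (f : V -> R) (del : R) (z : V) :
  {for z, continuous f} -> (forall y, 0 <= f y) -> 0 < del ->
  exists2 e : R, 0 < e & forall c r, 0 < (ratr r : R) ->
    `|z - ratvec c| < ratr r / 4 -> ratr r < e ->
    exists q, tent_fits f del (c, r, q) /\ (0 <= ratr q :> R).
Proof.
move=> fz_cont f0 dp; have d3 : 0 < del / 3 by rewrite divr_gt0.
have := proj1 (@cvgrPdist_lt _ _ _ (nbhs z) _ f (f z)) fz_cont _ d3.
move=> /(_ (nbhs_filter z)) /(proj1 (nbhs_normP _ _))[e e0 He].
exists (e / 2) => [|c r r0 zc re]; first by rewrite divr_gt0.
have near_fz y : `|y - ratvec c| < ratr r -> `|f z - f y| < del / 3.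
  move=> yc; apply: He; rewrite /ball_ /=.
  have : `|z - y| <= `|z - ratvec c| + `|y - ratvec c|.
    have -> : z - y = (z - ratvec c) - (y - ratvec c) by rewrite opprB addrA subrK.
    exact: ler_normB.
  lra.
have [fz_small|fz_big] := lerP (f z) (del / 3).
  exists 0%Q; split; last by rewrite rmorph0.
  split => y yc /=; rewrite rmorph0; first exact: f0.
  have /ltr_normlP[] : `|f z - f y| < del / 3 by apply: near_fz; lra.
  lra.
have [q /andP[]] : exists q : rat, Num.max 0 (f z - 2 * del / 3) < ratr q < f z - del / 3.
  by apply: ratr_between; rewrite gt_max; apply/andP; split; lra.
rewrite gt_max => /andP[q0 q1] q2; exists q; split; last exact: ltW.
split => y yc /=; first by have /ltr_normlP[] := near_fz y yc; lra.
have /ltr_normlP[] : `|f z - f y| < del / 3 by apply: near_fz; lra.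
lra.
Qed.

Lemma max_tents_approx (f : V -> R) (del : R) :
  Cc0 f -> (forall y, 0 <= f y) -> 0 < del ->
  exists L, all tent_ok L /\ forall y, max_tents L y <= f y <= max_tents L y + del.
Proof.
move=> cf f0 dp; have [fc [K [cK K0 fK]]] := cf.
have [|L [HL Hcov]] := @tent_cover K (tent_fits f del) cK K0.
  by move=> z _; exact: tent_fits_near (fc z) f0 dp.
exists L; split => [|y]; first by apply/allP => p /HL [].
apply/andP; split.
  apply: max_tents_le => // p /HL [vp [fit_below _]].
  have [yp|yp] := ltP `|y - ratvec p.1.1| (ratr p.1.2); last by rewrite tent_eq0.
  exact: le_trans (tent_le y vp) (fit_below y yp).
have [Ky|Ky] := pselect (K y); last by rewrite fK // addr_ge0 // ?max_tents_ge0 // ltW.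
have [p pL yp] := Hcov y Ky; have [vp [_ fit_above]] := HL p pL.
apply: le_trans (fit_above y yp) _; rewrite lerD2r -(tent_eq_height vp (ltW yp)).
exact: max_tents_ge.
Qed.

Definition tent_diff (t : seq tent_data * seq tent_data) (y : V) : R :=
  max_tents t.1 y - max_tents t.2 y.

Lemma Cc0_tent_diff t : all tent_ok t.1 -> all tent_ok t.2 -> Cc0 (tent_diff t).
Proof. by move=> v1 v2; apply: Cc0B; exact: Cc0_max_tents. Qed.

(* Approximate the positive and negative parts of [f] separately. *)
Lemma tent_diff_approx (f : V -> R) (del : R) : Cc0 f -> 0 < del ->
  exists t, [/\ all tent_ok t.1, all tent_ok t.2,
    forall y, `|f y - tent_diff t y| <= del & forall y, f y = 0 -> tent_diff t y = 0].
Proof.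
move=> cf dp; have d2 : 0 < del / 2 by rewrite divr_gt0.
have max0_ge0 (h : V -> R) y : 0 <= Num.max (h y) 0 by rewrite le_max lexx orbT.
have [L1 [v1 H1]] := max_tents_approx (Cc0_max cf Cc0_cst0) (max0_ge0 f) d2.
have [L2 [v2 H2]] := max_tents_approx (Cc0_max (Cc0_scale (-1) cf) Cc0_cst0)
  (max0_ge0 (fun y => -1 * f y)) d2.
exists (L1, L2); split => // y; rewrite /tent_diff /=;
  have /andP[h1 h1'] := H1 y; have /andP[h2 h2'] := H2 y;
  have m1 := max_tents_ge0 L1 y; have m2 := max_tents_ge0 L2 y.
  move: h1 h1' h2 h2' => /=; have [fy|fy] := lerP 0 (f y).
    rewrite max_r; last by lra.
    by move=> *; rewrite ler_norml; apply/andP; split; lra.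
  rewrite max_l; last by lra.
  by move=> *; rewrite ler_norml; apply/andP; split; lra.
by move=> fy0; move: h1 h2 => /=; rewrite fy0 mulr0 maxxx; lra.
Qed.

Lemma cint_tent_diff_dist nu f t (h : V -> R) (del : R) : Mplus nu -> Cc0 f ->
  all tent_ok t.1 -> all tent_ok t.2 -> Cc0 h -> 0 <= del ->
  (forall y, `|f y - tent_diff t y| <= del * h y) ->
  `|cint nu f - cint nu (tent_diff t)| <= del * cint nu h.
Proof.
move=> hn cf v1 v2 ch d0 Hb; have cg := Cc0_tent_diff v1 v2.
rewrite -cintB // -cint_scale //.
by apply: cint_norm_le => //; [exact: Cc0B | exact: Cc0_scale].
Qed.

(* [(t, a, e)] constrains [cint nu (tent_diff t)] to lie within [e] of [a]. *)
Local Notation tent_cond := ((seq tent_data * seq tent_data) * rat * rat)%type.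

Definition tent_conds_ok (cs : seq tent_cond) : bool :=
  all (fun c => all tent_ok c.1.1.1 && all tent_ok c.1.1.2) cs.

Definition tent_box (cs : seq tent_cond) : set (meas R d) :=
  [set nu | Mplus nu /\ forall c, c \in cs ->
    `|cint nu (tent_diff c.1.1) - ratr c.1.2| < ratr c.2].

Lemma tent_box_cat cs1 cs2 : tent_box (cs1 ++ cs2) = tent_box cs1 `&` tent_box cs2.
Proof.
apply/seteqP; split => nu.
  by move=> [hn H]; split; split => // c cs; apply: H; rewrite mem_cat cs ?orbT.
move=> [[hn H1] [_ H2]]; split => // c.
by rewrite mem_cat => /orP[]; [exact: H1 | exact: H2].
Qed.

Lemma tent_box1 nu t (s : R) : Mplus nu -> 0 < s ->
  exists c : tent_cond, [/\ c.1.1 = t, tent_box [:: c] nu &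
    forall nu', tent_box [:: c] nu' ->
      `|cint nu' (tent_diff t) - cint nu (tent_diff t)| < s].
Proof.
move=> hn s0; set I := cint nu (tent_diff t).
have [e /andP[e0 es]] : exists e : rat, (0 : R) < ratr e < s / 2.
  by apply: ratr_between; rewrite divr_gt0.
have [a /andP[a1 a2]] : exists a : rat, I - ratr e < ratr a < I + ratr e.
  by apply: ratr_between; lra.
exists (t, a, e); split => //.
  split => // c; rewrite inE => /eqP -> /=.
  by rewrite -/I ltr_norml; apply/andP; split; lra.
move=> nu' [_ /(_ _ (mem_head _ _)) /=]; rewrite !ltr_norml => /andP[? ?].
by apply/andP; split; lra.
Qed.

Lemma tent_box_approx nu f (eps : R) : Mplus nu -> Cc0 f -> 0 < eps ->
  exists cs, [/\ tent_conds_ok cs, tent_box cs nu &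
    forall nu', tent_box cs nu' -> `|cint nu' f - cint nu f| < eps].
Proof.
move=> hn cf e0; have [_ [K [cK K0 fK]]] := cf.
(* Also constraining [cint nu' h], with [h >= 1] on [K], bounds the approximation
   error [del * cint nu' h] uniformly near [nu]. *)
have [Lh [vLh Hh]] := max_tents_ge1 cK K0.
pose th := (Lh, [::] : seq tent_data); pose h := tent_diff th.
have hE y : h y = max_tents Lh y by rewrite /h /tent_diff subr0.
have ch : Cc0 h := Cc0_tent_diff (t := th) vLh isT.
set H := cint nu h.
have H0 : 0 <= H by apply: cint_ge0 => // y; rewrite hE max_tents_ge0.
pose del := eps / (4 * (H + 1)).
have del0 : 0 < del by rewrite divr_gt0 // mulr_gt0 //; lra.
have delE : del * (H + 1) = eps / 4.
  by rewrite /del invfM mulrA -mulrA mulVf ?mulr1 //; lra.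
have [t [v1 v2 fG fG0]] := tent_diff_approx cf del0.
have cG := Cc0_tent_diff v1 v2.
have fGh y : `|f y - tent_diff t y| <= del * h y.
  have [Ky|Ky] := pselect (K y); last first.
    by rewrite fG0 ?fK // subr0 normr0 mulr_ge0 // ?hE ?max_tents_ge0 // ltW.
  by apply: le_trans (fG y) _; rewrite -[X in X <= _]mulr1 ler_pM2l // hE Hh.
have [ch1 [eh ch_nu ch_near]] := tent_box1 th hn ltr01.
have eps2 : 0 < eps / 2 by rewrite divr_gt0.
have [cg [eg cg_nu cg_near]] := tent_box1 t hn eps2.
exists [:: ch1; cg]; split.
- by rewrite /tent_conds_ok /= eh eg vLh v1 v2.
- by rewrite -cat1s tent_box_cat.
move=> nu'; rewrite -cat1s tent_box_cat => -[box_h box_g]; have hn' := box_h.1.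
have /ch_near := box_h; have /cg_near := box_g.
rewrite -/h -/H !ltr_norml => /andP[g1 g2] /andP[_ h1].
have := cint_tent_diff_dist hn' cf v1 v2 ch (ltW del0) fGh.
have := cint_tent_diff_dist hn cf v1 v2 ch (ltW del0) fGh.
rewrite -/H !ler_norml => /andP[b1 b2] /andP[b1' b2'].
have le_h' : del * cint nu' h <= del * (H + 1) by rewrite ler_pM2l //; lra.
have le_h : del * H <= del * (H + 1) by rewrite ler_pM2l //; lra.
by apply/andP; split; lra.
Qed.

Lemma vague_open_tent_box (S : set (meas R d)) nu :
  vague_open S -> S nu -> Mplus nu ->
  exists cs, [/\ tent_conds_ok cs, tent_box cs nu & tent_box cs `<=` S].
Proof.
move=> oS Snu hn; have [k [fs [e [e0 Hfs HS]]]] := oS nu Snu hn.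
suff [cs [vc Bn Hcs]] : exists cs, [/\ tent_conds_ok cs, tent_box cs nu &
    forall nu', tent_box cs nu' -> forall i, (i < k)%N ->
      `|cint nu' (fs i) - cint nu (fs i)| < e].
  exists cs; split => // nu' Bnu'; have hn' := Bnu'.1.
  apply: HS => // i ik; have cfi := Hfs i ik.
  by rewrite !integ_cint // -EFinN -EFinD abse_EFin lte_fin; exact: Hcs.
elim: k Hfs {HS} => [|k IH] Hfs; first by exists [::]; split => //; split.
have [cs [vc Bn Hcs]] := IH (fun i ik => Hfs i (leqW ik)).
have [cs' [vc' Bn' Hcs']] := tent_box_approx hn (Hfs k (ltnSn k)) e0.
exists (cs ++ cs'); split; rewrite ?tent_box_cat //.
- by rewrite /tent_conds_ok all_cat; apply/andP; split.
- move=> nu' [Bcs Bcs'] i; rewrite ltnS leq_eqVlt => /orP [/eqP -> | ik].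
  + exact: Hcs'.
  + exact: Hcs.
Qed.

Lemma vague_open_cint_itv (f : V -> R) (a b : R) :
  Cc0 f -> vague_open [set nu | Mplus nu /\ a < cint nu f < b].
Proof.
move=> cf nu [hn /andP [ha hb]] _.
exists 1%N, (fun _ => f), (Num.min (cint nu f - a) (b - cint nu f)); split => //.
  by rewrite lt_min; apply/andP; split; lra.
move=> nu' hn' /(_ 0%N isT); rewrite !integ_cint // -EFinN -EFinD abse_EFin lte_fin.
rewrite lt_min !ltr_norml => /andP [/andP [h1 h2] /andP [h3 h4]].
by split => //; apply/andP; split; lra.
Qed.

Lemma measurable_cint (nu_ : V -> meas R d) f : (forall x, Mplus (nu_ x)) ->
  vague_measurable nu_ -> Cc0 f ->
  measurable_fun (setT : set BV) (fun x => cint (nu_ x) f).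
Proof.
move=> hM hv cf; apply: (measurability _ (RGenOpens.measurableE R)) => //.
move=> _ [_ [a [b ->] <-]].
have -> : setT `&` (fun x => cint (nu_ x) f) @^-1` [set` `]a, b[] =
    nu_ @^-1` [set nu | Mplus nu /\ a < cint nu f < b].
  by rewrite setTI; apply/seteqP; split => x /=; rewrite in_itv /=; [split | case].
by apply: hv; apply: sub_sigma_algebra; exact: vague_open_cint_itv.
Qed.

Lemma measurable_cint_lim (mus : nat -> V -> meas R d) (mu : V -> meas R d) f :
  (forall n x, Mplus (mus n x)) -> (forall n, vague_measurable (mus n)) ->
  (forall x, Mplus (mu x)) -> (forall x, vague_cvg (fun n => mus n x) (mu x)) ->
  Cc0 f -> measurable_fun (setT : set BV) (fun x => cint (mu x) f).
Proof.
move=> hMn hvn hM hc cf.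
apply: (@measurable_fun_cvg _ BV _ setT (fun n (x : BV) => cint (mus n x) f)).
  by move=> n; exact: measurable_cint.
by move=> x _; have := hc x f cf; rewrite integ_cint // => /fine_cvg.
Qed.

Lemma measurable_tent_box (mu : V -> meas R d) cs : (forall x, Mplus (mu x)) ->
  (forall f, Cc0 f -> measurable_fun (setT : set BV) (fun x => cint (mu x) f)) ->
  tent_conds_ok cs -> @measurable _ BV (mu @^-1` tent_box cs).
Proof.
move=> hM HI; elim: cs => [_|c cs IH /andP [/andP [v1 v2] vc]].
  suff -> : mu @^-1` tent_box [::] = setT by exact: measurableT.
  by apply/seteqP; split => x //= _; split.
rewrite -cat1s tent_box_cat preimage_setI; apply: measurableI; last exact: IH.
have -> : mu @^-1` tent_box [:: c] = (fun x => cint (mu x) (tent_diff c.1.1))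
    @^-1` [set` `]ratr c.1.2 - ratr c.2, ratr c.1.2 + ratr c.2[].
  apply/seteqP; split => x /=; rewrite in_itv /=.
    by move=> [_ /(_ _ (mem_head _ _))]; rewrite ltr_norml => /andP[? ?]; lra.
  move=> /andP[? ?]; split => // c'; rewrite inE => /eqP -> /=.
  by rewrite ltr_norml; apply/andP; split; lra.
rewrite -(setTI (_ @^-1` _)); apply: HI measurableT _ (measurable_itv _).
exact: Cc0_tent_diff.
Qed.

Lemma vague_measurable_of_cint (mu : V -> meas R d) : (forall x, Mplus (mu x)) ->
  (forall f, Cc0 f -> measurable_fun (setT : set BV) (fun x => cint (mu x) f)) ->
  vague_measurable mu.
Proof.
move=> hM HI S SS.
have sig := @sigma_algebra_image BV (meas R d) setT mu _ (@sigma_algebra_measurable _ BV).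
suff : image_set_system setT mu (@measurable _ BV) S.
  by rewrite /image_set_system /=; rewrite setTI.
apply: (smallest_sub sig) SS => {}S oS; rewrite /image_set_system /=; rewrite setTI.
(* [mu @^-1` S] is the union of the preimages of the boxes inside [S], which
   [pickle] enumerates. *)
pose F (i : nat) : set BV := if choice.unpickle i is Some cs then
  if pselect (tent_conds_ok cs /\ tent_box cs `<=` S) is left _
  then mu @^-1` tent_box cs else set0 else set0.
suff -> : mu @^-1` S = \bigcup_i F i.
  apply: bigcupT_measurable => i; rewrite /F; case: (choice.unpickle i) => [cs|//].
  by case: pselect => [[vc _]|_ //]; exact: measurable_tent_box.
apply/seteqP; split => x /=.
  move=> Sx; have [cs [vc Bx BS]] := vague_open_tent_box oS Sx (hM x).
  exists (choice.pickle cs) => //; rewrite /F choice.pickleK.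
  by case: pselect => // -[].
move=> [i _]; rewrite /F; case: (choice.unpickle i) => [cs|//].
by case: pselect => // -[_ BS] Bx; exact: BS.
Qed.

End tents.

Section vague_lower_semicontinuity.
Variables (R : realType) (d : nat).
Local Notation V := (Rd R d).
Local Notation BV := (BRd R d).
Local Notation V0 := (~` [set (0 : V)]).

Lemma continuous_eucl : continuous (@eucl R d).
Proof.
move=> y; apply: (@continuous_comp _ _ _ _ Num.sqrt); last exact: sqrt_continuous.
apply: continuous_big => [|i _ z]; first exact: add_continuous.
apply: (@continuous_comp _ _ _ _ (fun t : R => t ^+ 2)); last exact: exprn_continuous.
exact: coord_continuous.
Qed.

Lemma eucl0 : @eucl R d 0 = 0.
Proof. by rewrite /eucl big1 ?sqrtr0 // => i _; rewrite mxE expr0n. Qed.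

(* The first factor increases to the indicator of [phi > 0] as [k -> oo]; the
   second one cuts the support down to the ball of radius [k + 1]. *)
Definition cutoff (phi : V -> R) (k : nat) (y : V) : R :=
  clamp01 (k.+1%:R * phi y - 1) * clamp01 (k.+1%:R - `|y|).

Lemma cutoff_ge0 phi k y : 0 <= cutoff phi k y.
Proof. by rewrite /cutoff mulr_ge0 // clamp01_ge0. Qed.

Lemma cutoff_le1 phi k y : cutoff phi k y <= 1.
Proof.
apply: le_trans (ler_piMr (clamp01_ge0 _) (clamp01_le1 _)) _.
exact: clamp01_le1.
Qed.

Lemma cutoff_small phi k y : phi y < k.+1%:R^-1 -> cutoff phi k y = 0.
Proof.
move=> h; rewrite /cutoff clamp01_eq0 ?mul0r //.
have : k.+1%:R * phi y < k.+1%:R * k.+1%:R^-1 by rewrite ltr_pM2l.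
by rewrite mulfV //; lra.
Qed.

Lemma cutoff_eq0 phi k y : phi y <= 0 -> cutoff phi k y = 0.
Proof. by move=> p0; apply/cutoff_small/(le_lt_trans p0); rewrite invr_gt0. Qed.

Lemma cutoff_nondecreasing phi y k k' :
  (k <= k')%N -> cutoff phi k y <= cutoff phi k' y.
Proof.
move=> kk; have [p0|p0] := lerP (phi y) 0; first by rewrite cutoff_eq0 // cutoff_ge0.
have kk' : (k.+1%:R : R) <= k'.+1%:R by rewrite ler_nat ltnS.
apply: ler_pM; rewrite ?clamp01_ge0 //; apply: le_clamp01; rewrite lerD2r //.
by rewrite ler_pM2r.
Qed.

Lemma cutoff_eq1 phi y : 0 < phi y -> \forall k \near \oo, cutoff phi k y = 1.
Proof.
move=> p0; near=> k.
have h1 : 2 / phi y + `|y| + 1 < k.+1%:R.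
  apply: lt_le_trans (truncnS_gt _) _; rewrite ler_nat ltnS.
  by near: k; exists (Num.truncn (2 / phi y + `|y| + 1)).
have h2 : 0 <= 2 / phi y by rewrite divr_ge0 // ltW.
have h3 : 2 < k.+1%:R * phi y by rewrite -ltr_pdivrMr //; have := normr_ge0 y; lra.
by rewrite /cutoff !clamp01_eq1 ?mulr1 //; lra.
Unshelve. all: by end_near.
Qed.

Lemma Cc0_cutoff (phi : V -> R) k : continuous phi -> phi 0 <= 0 -> Cc0 (cutoff phi k).
Proof.
move=> cphi p0; split.
  move=> y; have cst (a : R) : {for y, continuous (fun _ : V => a)}.
    exact: cst_continuous.
  have c1 : {for y, continuous (fun y => clamp01 (k.+1%:R * phi y - 1))}.
    apply: (@continuous_comp _ _ _ _ (@clamp01 R)); last exact: continuous_clamp01.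
    exact: (continuousB (continuousM (cst _) (cphi y)) (cst _)).
  have c2 : {for y, continuous (fun y : V => clamp01 (k.+1%:R - `|y|))}.
    apply: (@continuous_comp _ _ _ _ (@clamp01 R)); last exact: continuous_clamp01.
    exact: (continuousB (cst _) (@norm_continuous _ V y)).
  exact: (continuousM c1 c2).
exists ([set y : V | `|y - 0| <= k.+1%:R] `&` [set y | k.+1%:R^-1 <= phi y]); split.
- apply: compact_closedI; first exact: compact_closed_ballRd.
  by have := proj1 (continuous_closedP _) cphi _ (@closed_ge R k.+1%:R^-1).
- by move=> [_ /=]; apply/negP; rewrite -ltNge; apply: le_lt_trans p0 _; rewrite invr_gt0.
move=> y /not_andP [/negP | /negP]; rewrite -ltNge; last exact: cutoff_small.
by rewrite subr0 => yk; rewrite /cutoff (@clamp01_eq0 _ (k.+1%:R - `|y|)) ?mulr0 //; lra.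
Qed.

(* Monotone convergence in [k] and vague convergence in [n]: the bound [B]
   survives both limits. *)
Lemma integral_le_vague_lim (nus : nat -> meas R d) (nu : meas R d)
    (h : nat -> V -> R) (F : V -> \bar R) (B : \bar R) :
  vague_cvg nus nu -> (forall k, Cc0 (h k)) -> (forall k y, 0 <= h k y) ->
  (forall y k k', (k <= k')%N -> h k y <= h k' y) ->
  (forall y, y != 0 -> (fun k => (h k y)%:E) @ \oo --> F y) ->
  (forall k n, integ (nus n) (h k) <= B)%E ->
  (\int[nu]_(y in (V0 : set BV)) F y <= B)%E.
Proof.
move=> hc ch h0 hmono hF hB.
have mc : (\int[nu]_(y in (V0 : set BV)) (h k y)%:E)%E @[k --> \oo] -->
    (\int[nu]_(y in (V0 : set BV)) limn (fun k => (h k y)%:E))%E.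
  apply: cvg_monotone_convergence; first exact: measurableV0.
  - by move=> k; exact: Cc0_measurable_fun.
  - by move=> k y _; rewrite lee_fin.
  - by move=> y _ k k' kk; rewrite lee_fin; exact: hmono.
have -> : (\int[nu]_(y in (V0 : set BV)) F y =
          \int[nu]_(y in (V0 : set BV)) limn (fun k => (h k y)%:E))%E.
  apply: eq_integral => y; rewrite inE => y0; apply/esym/(cvg_lim (@ereal_hausdorff R)).
  by apply: hF; apply/eqP.
rewrite -(cvg_lim (@ereal_hausdorff R) mc).
apply: lime_le; first by apply/cvg_ex; eexists; exact: mc.
apply: nearW => k; have hk := hc (h k) (ch k); rewrite /integ in hk.
rewrite -(cvg_lim (@ereal_hausdorff R) hk).
apply: lime_le; first by apply/cvg_ex; eexists; exact: hk.
by apply: nearW => n; exact: hB.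
Qed.

Lemma Cc0_mul_cutoff_norm (g : V -> R) k :
  {within V0, continuous g} -> Cc0 (fun y => g y * cutoff Num.norm k y).
Proof.
move=> hgc; have cnorm : continuous (@Num.norm _ V) by move=> y; exact: norm_continuous.
have [cchi [K [cK K0 chiK]]] : Cc0 (cutoff Num.norm k).
  by apply: Cc0_cutoff => //; rewrite normr0.
split; last by exists K; split => // y /chiK ->; rewrite mulr0.
have gc : {in V0, continuous g}.
  by rewrite -(continuous_open_subspace g (closed_openC (@closed_set1_0 R d))).
move=> y; have [->|y0] := eqVneq y 0; last first.
  by apply: continuousM (cchi y); apply: gc; rewrite inE; exact/eqP.
rewrite /continuous_at cutoff_eq0 ?normr0 // mulr0.
apply: (@cvg_near_cst _ _ 0 _ (nbhs (0 : V))); apply/nbhs_ballP.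
exists k.+1%:R^-1; first by rewrite /= invr_gt0.
move=> z; rewrite -ball_normE /ball_ /= sub0r normrN => zk.
by rewrite cutoff_small ?mulr0.
Qed.

Lemma integ_le_vague_lim (g : V -> R) (nus : nat -> meas R d) nu C :
  {within V0, continuous g} -> (forall y, y != 0 -> 0 <= g y) ->
  vague_cvg nus nu -> (forall n, integ (nus n) g <= C%:E)%E -> (integ nu g <= C%:E)%E.
Proof.
move=> hgc hg0 hc hC; pose h k y := g y * cutoff Num.norm k y.
have ch k : Cc0 (h k) by exact: Cc0_mul_cutoff_norm.
have h0 k y : 0 <= h k y.
  have [->|y0] := eqVneq y 0; first by rewrite /h cutoff_eq0 ?normr0 ?mulr0.
  by rewrite /h mulr_ge0 ?cutoff_ge0 // hg0.
have hmono y k k' : (k <= k')%N -> h k y <= h k' y.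
  move=> kk; have [->|y0] := eqVneq y 0; first by rewrite /h !cutoff_eq0 ?normr0.
  by rewrite /h ler_wpM2l ?hg0 // cutoff_nondecreasing.
have hlim y : y != 0 -> h k y @[k --> \oo] --> g y.
  move=> y0; apply: cvg_near_cst; have /cutoff_eq1 : 0 < `|y| by rewrite normr_gt0.
  by apply: filterS => k hk; rewrite /h hk mulr1.
have mg : measurable_fun (V0 : set BV) (g : BV -> R).
  apply: (@measurable_fun_cvg _ BV _ V0 (fun k (y : BV) => h k y)).
    by move=> k; apply: continuous_measurable_funRd; exact: (ch k).1.
  by move=> y y0; apply: hlim; exact/eqP.
apply: (integral_le_vague_lim hc ch h0 hmono (F := fun y => (g y)%:E)).
  by move=> y y0; apply: cvg_EFin; [exact: nearW | exact: hlim].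
move=> k n; apply: le_trans (hC n); apply: ge0_le_integral.
- exact: measurableV0.
- by move=> y _; rewrite lee_fin.
- exact: Cc0_measurable_fun.
- exact/measurable_EFinP.
- by move=> y /eqP y0; rewrite lee_fin /h ler_piMr ?cutoff_le1 // hg0.
Qed.

Lemma integral_V0_indic (nu : meas R d) (W : set V) : @measurable _ BV W -> ~ W 0 ->
  (\int[nu]_(y in (V0 : set BV)) (\1_W y)%:E = nu W)%E.
Proof.
move=> mW W0; rewrite integral_indic //; last exact: measurableV0.
congr (nu _); apply/seteqP; split => [y [] //|y Wy]; split => // y0.
by apply: W0; rewrite -y0.
Qed.

Lemma tail_le_vague_lim (nus : nat -> meas R d) nu (r e : R) : 0 < r ->
  vague_cvg nus nu -> (forall n, nus n [set y | (r < eucl y)%R] <= e%:E)%E ->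
  (nu [set y | (r < eucl y)%R] <= e%:E)%E.
Proof.
move=> r0 hc hb; pose W := [set y : V | r < eucl y].
have W0 : ~ W 0 by rewrite /W /= eucl0; lra.
have mW : @measurable _ BV W.
  apply: open_measurableRd.
  by have := proj1 (continuousP _) continuous_eucl _ (@open_gt R r).
pose phi (y : V) := eucl y - r.
have cphi : continuous phi.
  by move=> y; apply: continuousB; [exact: continuous_eucl | exact: cst_continuous].
have Wphi y : ~ W y -> phi y <= 0 by rewrite /phi subr_le0 leNgt => /negP.
have cc k : Cc0 (cutoff phi k).
  by apply: Cc0_cutoff => //; rewrite /phi eucl0 sub0r oppr_le0 ltW.
rewrite -(integral_V0_indic nu mW W0).
apply: (integral_le_vague_lim hc cc).
- exact: cutoff_ge0.
- by move=> y k k'; exact: cutoff_nondecreasing.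
- move=> y _; rewrite indicE; apply: cvg_near_cst.
  have [Wy|Wy] := pselect (W y); last first.
    by rewrite memNset //; apply: nearW => k; rewrite cutoff_eq0 ?Wphi.
  have : 0 < phi y by rewrite /phi subr_gt0.
  by rewrite mem_set // => /cutoff_eq1; apply: filterS => k ->.
move=> k n; apply: le_trans (hb n); rewrite -(integral_V0_indic (nus n) mW W0).
apply: ge0_le_integral => //.
- exact: measurableV0.
- by move=> y _; rewrite lee_fin cutoff_ge0.
- exact: Cc0_measurable_fun.
- by apply/measurable_EFinP; exact: measurable_indic.
- move=> y _; rewrite lee_fin indicE; have [Wy|Wy] := pselect (W y).
    by rewrite mem_set // cutoff_le1.
  by rewrite memNset // cutoff_eq0 ?Wphi.
Qed.

End vague_lower_semicontinuity.

Theorem lemmaA4 (R : realType) (d : nat) (g : Rd R d -> R)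
  (hgc : {within ~` [set (0 : Rd R d)], continuous g})
  (hg0 : forall y : Rd R d, y != 0 -> 0 <= g y)
  (mus : nat -> Rd R d -> meas R d) (mu : Rd R d -> meas R d)
  (hmus : forall n, Kg g (mus n))
  (hmu : forall x, Mplus (mu x))
  (hcvg : bp_cvg g mus mu) :
  Kg g mu.
Proof.
have [[C HC] hcv htight] := hcvg.
have hMn n x : Mplus (mus n x) by have [] := hmus n.
have hvn n : vague_measurable (mus n) by have [] := hmus n.
split => //.
- apply: vague_measurable_of_cint => // f cf.
  exact: measurable_cint_lim hMn hvn hmu hcv cf.
- by exists C => x; apply: integ_le_vague_lim hgc hg0 (hcv x) _ => n; exact: HC.
- move=> K cK e e0.
  have r_pos : \forall r \near pinfty_nbhs R, 0 < r by exact: nbhs_pinfty_gt.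
  apply: filterS2 r_pos (htight K cK e e0) => r r0 Hr x Kx.
  by apply: tail_le_vague_lim r0 (hcv x) _ => n; exact: Hr.
Qed.
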